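(* Let $d\geq 0$ and $i>0$ be integers, and let $h(t)$ be a polynomial with rational coefficients of degree at most $d+1$ that is symmetric about $\frac{d+1}{2}$, i.e. $h(t)=t^{d+1}h(1/t)$. If $g^{(d,i)}(h(t))\geq 0$ componentwise, then $g^{(d,i+1)}(h(t))\geq 0$ componentwise.
   Context: For integers $d\geq 0$ and $i>0$, let $q\geq 0$, $1\leq r\leq i$ be the unique integers with $d+1=qi+r$ and define $P_{d,i}(t)=(1+t+\cdots+t^i)^q(1+t+\cdots+t^r)$; also set $P_{-1,i}(t)=1$. Let $B_{d,i}$ be the ordered list $\big(P_{d,i}(t),\ tP_{d-2,i}(t),\ t^2P_{d-4,i}(t),\ldots,\ t^{\lfloor (d+1)/2\rfloor}P_{d-2\lfloor (d+1)/2\rfloor,i}(t)\big)$, which is a basis of the $\mathbb{Q}$-vector space of polynomials of degree at most $d+1$ satisfying $h(t)=t^{d+1}h(1/t)$. For such $h$, $g^{(d,i)}(h(t))=(g_0,\ldots,g_{\lfloor (d+1)/2\rfloor})$ is the vector of coefficients of $h$ in the basis $B_{d,i}$, i.e. $h(t)=\sum_j g_j t^jP_{d-2j,i}(t)$. *)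

From HB Require Import structures.
From mathcomp Require Import all_boot all_order all_algebra.
Set Implicit Arguments. Unset Strict Implicit. Unset Printing Implicit Defensive.
Import Order.TTheory GRing.Theory Num.Theory.
Local Open Scope ring_scope.

Definition geomP (k : nat) : {poly rat} := \sum_(0 <= m < k.+1) 'X^m.

(* Pn n i = P_{n-1,i}(t).  For n = d+1 >= 1 write n = q*i + r with 1 <= r <= i,
   i.e. q = (n-1) %/ i, r = (n-1) %% i + 1; Pn 0 i = P_{-1,i} = 1. *)
Definition Pn (n i : nat) : {poly rat} :=
  if n is n'.+1 then geomP i ^+ (n' %/ i) * geomP (n' %% i).+1 else 1.

(* P_{d,i}, for d >= -1 encoded as d+1 *)
Definition P (d i : nat) : {poly rat} := Pn d.+1 i.

Definition in_basis (d i : nat) (g : nat -> rat) : {poly rat} :=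
  \sum_(0 <= j < (d.+1)./2.+1) (g j)%:P * 'X^j * Pn (d.+1 - j.*2)%N i.

Definition sym_poly (d : nat) (h : {poly rat}) : Prop :=
  (size h <= d.+2)%N /\ forall k : nat, (k <= d.+1)%N -> h`_k = h`_(d.+1 - k).

Definition nonneg_coeffs (d : nat) (g : nat -> rat) : Prop :=
  forall j : nat, (j <= (d.+1)./2)%N -> 0 <= g j.

(* Write G_k = 1 + t + ... + t^k, so that P_{n-1,s} = G_s^q G_c whenever
   n = q s + c with c <= s.  For fixed n and s let cone n s be the set of
   nonnegative combinations of the polynomials t^j P_{n-1-2j,s}.  The proof
   shows that cone n s is closed under multiplication by G_a for every a <= s
   (raising n by a).  The heart of this is the statement that G_r G_a lies in
   cone (r + a) s for r, a <= s, proved by induction on r + a from the two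
   identities  G_{r+1} G_{a+1} = t G_r G_a + G_{r+a+2}  and its generalisation
   G_{x+v+1} G_{y+v+1} = G_{x+y+v+2} G_v + t^{v+1} G_x G_y.
   Since P_{n-1,i} = G_i^q G_c with c < i, repeated multiplication shows that
   every basis element of B_{d,i} lies in the cone for i+1, hence so does h.
   Finally the coordinates of h in B_{d,i+1} are unique, because the basis is
   triangular: its j-th element is t^j times a polynomial with constant term 1. *)
From HB Require Import structures.
From mathcomp Require Import all_boot all_order all_algebra zify.
Import Order.TTheory GRing.Theory Num.Theory.
Local Open Scope ring_scope.

Lemma geomP0 : geomP 0 = 1.
Proof. by rewrite /geomP big_nat1 expr0. Qed.

Lemma geomPS k : geomP k.+1 = geomP k + 'X^(k.+1).
Proof. by rewrite /geomP big_nat_recr. Qed.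

Lemma geomP_split b c : geomP (b + c).+1 = geomP b + 'X^(b.+1) * geomP c.
Proof.
elim: c => [|c IH]; first by rewrite addn0 geomP0 mulr1 geomPS.
by rewrite addnS geomPS IH geomPS mulrDr -exprD -addrA addSn addnS.
Qed.

Lemma geomP_mulSS a b :
  geomP a.+1 * geomP b.+1 = 'X * (geomP a * geomP b) + geomP (a + b).+2.
Proof.
have Ga : geomP a.+1 = 1 + 'X * geomP a by rewrite -(add0n a) geomP_split geomP0.
have Gab : geomP (a + b).+2 = geomP b + 'X^(b.+1) * (1 + 'X * geomP a).
  by rewrite -Ga -geomP_split addnC addnS.
rewrite Ga geomPS Gab !mulrDl !mulrDr !mul1r !mulr1.
rewrite (mulrC ('X * geomP a) 'X^(b.+1)) mulrA [RHS]addrC -!addrA.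
by rewrite (addrC ('X^(b.+1) * ('X * geomP a))).
Qed.

(* The generalisation used when r + a exceeds s; v = 0 is geomP_mulSS. *)
Lemma geomP_mul v x y :
  geomP (x + v.+1) * geomP (y + v.+1) =
  geomP (x + y + v.+2) * geomP v + 'X^(v.+1) * (geomP x * geomP y).
Proof.
elim: v => [|v IH].
  by rewrite !addn1 geomP_mulSS geomP0 mulr1 expr1 addrC addn2.
rewrite [(x + v.+2)%N]addnS [(y + v.+2)%N]addnS geomP_mulSS IH.
have -> : (x + y + v.+3 = (x + y + v.+2).+1)%N by lia.
rewrite geomP_mulSS mulrDr (mulrA 'X 'X^(v.+1)) -exprS addrAC.
by have -> : ((x + v.+1 + (y + v.+1)).+2 = (x + y + v.+2 + v).+2)%N by lia.
Qed.

Lemma Pn_divn s n : (0 < s)%N -> Pn n s = geomP s ^+ (n %/ s) * geomP (n %% s).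
Proof.
move=> s_gt0; case: n => [|n]; first by rewrite /Pn div0n mod0n expr0 geomP0 mulr1.
rewrite /Pn; set q := (n %/ s)%N; set c := (n %% s)%N.
have -> : (n.+1 = q * s + c.+1)%N by rewrite addnS /q /c -divn_eq.
rewrite divnMDl // modnMDl.
have : (c.+1 <= s)%N by rewrite /c ltn_pmod.
rewrite leq_eqVlt => /orP [/eqP -> | lt_cs].
  by rewrite divnn s_gt0 modnn geomP0 mulr1 exprD expr1.
by rewrite divn_small // modn_small // addn0.
Qed.

Lemma PnE s q c : (0 < s)%N -> (c <= s)%N -> Pn (q * s + c) s = geomP s ^+ q * geomP c.
Proof.
move=> s_gt0; rewrite Pn_divn // divnMDl // modnMDl leq_eqVlt => /orP [/eqP -> | lt_cs].
  by rewrite divnn s_gt0 modnn geomP0 mulr1 exprD expr1.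
by rewrite divn_small // modn_small // addn0.
Qed.

Lemma Pn_mul_geomP s q n :
  (0 < s)%N -> geomP s ^+ q * Pn n s = Pn (q * s + n) s.
Proof.
move=> s_gt0.
have -> : (q * s + n = (q + n %/ s) * s + n %% s)%N by rewrite mulnDl -addnA -divn_eq.
by rewrite PnE ?Pn_divn ?exprD ?mulrA // ltnW // ltn_pmod.
Qed.

Inductive cone (n s : nat) : {poly rat} -> Prop :=
| cone0 : cone n s 0
| coneD p q : cone n s p -> cone n s q -> cone n s (p + q)
| coneG (c : rat) (j m : nat) : 0 <= c -> (m + j.*2)%N = n ->
    cone n s (c%:P * 'X^j * Pn m s).

Lemma cone_Pn n s : cone n s (Pn n s).
Proof.
have := @coneG n s 1 0 n ler01 (addn0 n).
by rewrite polyC1 mul1r expr0 mul1r.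
Qed.

Lemma cone_scale n s c p : 0 <= c -> cone n s p -> cone n s (c%:P * p).
Proof.
move=> c_ge0; elim=> [|p1 p2 _ IH1 _ IH2|c' j m c'_ge0 <-].
- by rewrite mulr0; apply: cone0.
- by rewrite mulrDr; apply: coneD.
- by rewrite !mulrA -polyCM; apply: coneG => //; apply: mulr_ge0.
Qed.

Lemma cone_shift n n' s k p :
  (n + k.*2)%N = n' -> cone n s p -> cone n' s ('X^k * p).
Proof.
move=> <-; elim=> [|p1 p2 _ IH1 _ IH2|c j m c_ge0 <-].
- by rewrite mulr0; apply: cone0.
- by rewrite mulrDr; apply: coneD.
- by rewrite mulrA (mulrCA 'X^k) -exprD; apply: coneG => //; lia.
Qed.

Lemma cone_mul_geomPs n s q p :
  (0 < s)%N -> cone n s p -> cone (q * s + n) s (geomP s ^+ q * p).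
Proof.
move=> s_gt0; elim=> [|p1 p2 _ IH1 _ IH2|c j m c_ge0 <-].
- by rewrite mulr0; apply: cone0.
- by rewrite mulrDr; apply: coneD.
- rewrite mulrCA Pn_mul_geomP //.
  by apply: coneG => //; rewrite addnA.
Qed.

Lemma cone_geomP s c : (0 < s)%N -> (c <= s)%N -> cone c s (geomP c).
Proof.
by move=> s_gt0 c_le; have := cone_Pn (0 * s + c) s; rewrite PnE // expr0 mul1r.
Qed.

Lemma cone_geomPs s c :
  (0 < s)%N -> (c <= s)%N -> cone (s + c) s (geomP s * geomP c).
Proof.
by move=> s_gt0 c_le; have := cone_Pn (1 * s + c) s; rewrite PnE // expr1 mul1n.
Qed.

Lemma cone_geomP2 s r a :
  (0 < s)%N -> (r <= s)%N -> (a <= s)%N -> cone (r + a) s (geomP r * geomP a).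
Proof.
move=> s_gt0; have [N] := ubnP (r + a); elim: N r a => // N IH r a ltN r_le a_le.
case: r r_le ltN => [|r] r_le ltN; first by rewrite geomP0 mul1r; apply: cone_geomP.
case: a a_le ltN => [|a] a_le ltN.
  by rewrite geomP0 mulr1 addn0; apply: cone_geomP.
have [-> | r_lt] := eqVneq r.+1 s; first exact: cone_geomPs.
have [-> | a_lt] := eqVneq a.+1 s; first by rewrite mulrC addnC; apply: cone_geomPs.
have [small|large] := leqP (r.+1 + a.+1) s.
  rewrite geomP_mulSS; apply: coneD.
    rewrite -[X in X * _]expr1; apply: (cone_shift (r + a)%N); first lia.
    by apply: IH; lia.
  by rewrite -addSn -addnS; apply: cone_geomP.
(* G_{r+1} G_{a+1} = G_s G_{r+a+2-s} + t^{r+a+3-s} G_{s-a-2} G_{s-r-2} *)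
have := geomP_mul (r.+1 + a.+1 - s) (s - a.+1 - 1) (s - r.+1 - 1).
have -> : (s - a.+1 - 1 + (r.+1 + a.+1 - s).+1 = r.+1)%N by lia.
have -> : (s - r.+1 - 1 + (r.+1 + a.+1 - s).+1 = a.+1)%N by lia.
have -> : (s - a.+1 - 1 + (s - r.+1 - 1) + (r.+1 + a.+1 - s).+2 = s)%N by lia.
move=> ->; apply: coneD.
  by rewrite -[X in cone X _ _](subnKC (ltnW large)); apply: cone_geomPs; lia.
by apply: (cone_shift (s - a.+1 - 1 + (s - r.+1 - 1))%N); [lia | apply: IH; lia].
Qed.

Lemma cone_mul_geomP n s a p :
  (0 < s)%N -> (a <= s)%N -> cone n s p -> cone (n + a) s (p * geomP a).
Proof.
move=> s_gt0 a_le; elim=> [|p1 p2 _ IH1 _ IH2|c j m c_ge0 <-].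
- by rewrite mul0r; apply: cone0.
- by rewrite mulrDl; apply: coneD.
- rewrite Pn_divn // -!mulrA; apply: cone_scale => //.
  apply: (cone_shift (m %/ s * s + (m %% s + a))%N).
    by rewrite addnA -divn_eq addnAC.
  apply: cone_mul_geomPs => //.
  by apply: cone_geomP2 => //; apply: ltnW; apply: ltn_pmod.
Qed.

Lemma cone_Pn_succ n i : (0 < i)%N -> cone n i.+1 (Pn n i).
Proof.
move=> i_gt0; rewrite Pn_divn // {1}(divn_eq n i).
apply: cone_mul_geomP => //; first by apply: ltnW; rewrite ltnS ltnW // ltn_pmod.
elim: (n %/ i)%N => [|q IH]; first by rewrite expr0; apply: (cone_Pn 0).
by rewrite exprSr mulSnr; apply: cone_mul_geomP.
Qed.

Lemma cone_in_basis_succ d i g :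
  (0 < i)%N -> nonneg_coeffs d g -> cone d.+1 i.+1 (in_basis d i g).
Proof.
move=> i_gt0 g_ge0; rewrite /in_basis big_mkord.
elim/big_rec: _ => [|j p _ p_cone]; first exact: cone0.
have j_le : (j <= (d.+1)./2)%N by rewrite -ltnS ltn_ord.
apply: coneD => //; rewrite -mulrA; apply: cone_scale; first exact: g_ge0.
by apply: (cone_shift (d.+1 - j.*2)%N); [lia | apply: cone_Pn_succ].
Qed.

Lemma cone_coords d s p :
  cone d.+1 s p -> exists g : nat -> rat, p = in_basis d s g /\ nonneg_coeffs d g.
Proof.
move=> p_cone.
suff [g [-> g_ge0]] : exists g : nat -> rat, p = in_basis d s g /\ forall j, 0 <= g j.
  by exists g; split=> // j _.
elim: p_cone => [|p1 p2 _ [g1 [-> g1_ge0]] _ [g2 [-> g2_ge0]]|c j m c_ge0 mj].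
- exists (fun=> 0); split=> //; rewrite /in_basis big1 // => j _; by rewrite polyC0 !mul0r.
- exists (fun j => g1 j + g2 j); split; last by move=> j; apply: addr_ge0.
  by rewrite /in_basis -big_split; apply: eq_bigr => j _; rewrite polyCD !mulrDl.
- exists (fun k => if k == j then c else 0); split; last by move=> k; case: ifP.
  have j_lt : (j < (d.+1)./2.+1)%N by lia.
  rewrite /in_basis big_mkord (bigD1 (Ordinal j_lt)) //= eqxx big1 ?addr0.
    by have -> : (d.+1 - j.*2 = m)%N by lia.
  move=> k k_ne; have /negbTE -> : nat_of_ord k != j := k_ne.
  by rewrite polyC0 !mul0r.
Qed.

Lemma triangular_free (R : idomainType) N (e : nat -> R) (Q : nat -> {poly R}) :
  (forall j, (Q j)`_0 = 1) ->
  \sum_(0 <= j < N) (e j)%:P * 'X^j * Q j = 0 -> forall j, (j < N)%N -> e j = 0.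
Proof.
elim: N e Q => [|N IH] e Q Q0 sum0 j j_lt //.
rewrite big_nat_recl // in sum0.
have shift : \sum_(0 <= k < N) (e k.+1)%:P * 'X^(k.+1) * Q k.+1
    = 'X * \sum_(0 <= k < N) (e k.+1)%:P * 'X^k * Q k.+1.
  by rewrite mulr_sumr; apply: eq_bigr => k _; rewrite exprS !mulrA (mulrC 'X).
rewrite shift in sum0.
have e0 : e 0%N = 0.
  have := congr1 (fun p : {poly R} => p`_0) sum0.
  by rewrite /= coefD coefXM /= expr0 mulr1 coefCM Q0 mulr1 addr0 coef0.
case: j j_lt => [|j] j_lt; first exact: e0.
move: sum0; rewrite e0 polyC0 !mul0r add0r => /eqP.
rewrite mulf_eq0 polyX_eq0 /= => /eqP sum0.
exact: (IH (fun k => e k.+1) (fun k => Q k.+1)).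
Qed.

Lemma Pn_coef0 n s : (Pn n s)`_0 = 1.
Proof.
have geomP_coef0 k : (geomP k)`_0 = 1.
  case: k => [|k]; first by rewrite geomP0 coef1.
  by rewrite -(add0n k) geomP_split geomP0 coefD coef1 coefXnM addr0.
case: n => [|n]; first by rewrite /Pn coef1.
rewrite /Pn coef0M geomP_coef0 mulr1.
by elim: (n %/ s)%N => [|q IH]; rewrite ?expr0 ?coef1 // exprS coef0M geomP_coef0 mul1r.
Qed.

Lemma in_basis_inj d s g g' :
  in_basis d s g = in_basis d s g' -> forall j, (j <= (d.+1)./2)%N -> g j = g' j.
Proof.
move=> eq_g j j_le; apply/eqP; rewrite -subr_eq0; apply/eqP.
apply: (@triangular_free _ (d.+1)./2.+1 (fun j => g j - g' j)
                          (fun j => Pn (d.+1 - j.*2) s)) => //.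
  by move=> k; apply: Pn_coef0.
rewrite (eq_bigr (fun k => (g k)%:P * 'X^k * Pn (d.+1 - k.*2) s -
                           (g' k)%:P * 'X^k * Pn (d.+1 - k.*2) s)).
  by rewrite sumrB; apply/eqP; rewrite subr_eq0 -/(in_basis d s g) eq_g.
by move=> k _; rewrite polyCB !mulrBl.
Qed.

Theorem proposition1p2 (d i : nat) (h : {poly rat}) :
  (0 < i)%N -> sym_poly d h ->
  (exists g : nat -> rat, h = in_basis d i g /\ nonneg_coeffs d g) ->
  (exists g' : nat -> rat, h = in_basis d i.+1 g' /\ nonneg_coeffs d g') /\
  (forall g' : nat -> rat, h = in_basis d i.+1 g' -> nonneg_coeffs d g').
Proof.
move=> i_gt0 _ [g [-> g_ge0]].
have [c [h_eq c_ge0]] := cone_coords _ _ _ (cone_in_basis_succ _ _ _ i_gt0 g_ge0).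
split; first by exists c.
move=> g' h_eq' j j_le.
rewrite -(in_basis_inj _ _ _ _ (etrans (esym h_eq) h_eq') j j_le).
exact: c_ge0.
Qed.
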